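(* The Segre variety $S_3(3)$ has exactly $3424$ geometric hyperplanes. Exactly $3280$ of them are projective, and the remaining $144$ are non-projective, each of the latter being an ovoid. More precisely, the numbers of geometric hyperplanes with $37$, $28$, $22$, $19$ and $16$ points are respectively $64$, $288$, $1728$, $768$ and $576$; the $64$ with $37$ points are the singular hyperplanes, the $576$ with $16$ points are the ovoids, and exactly $432$ of the ovoids are projective.
   Context: Let $L=\mathrm{PG}(1,3)$, a set of $4$ points. The Segre variety $S_3(3)$ is the point-line incidence structure with point set $L^3$ ($64$ points) whose lines are the $4$-element sets obtained by fixing two coordinates and letting the third run over $L$. A geometric hyperplane is a proper subset $H$ of points such that every line is contained in $H$ or meets $H$ in exactly one point. A singular hyperplane with nucleus $p$ is the set of points agreeing with $p$ in at least one coordinate; an ovoid is a geometric hyperplane containing no line. With $V=\mathrm{GF}(3)^2$, the Segre embedding sends $([x_1],[x_2],[x_3])$ to $[x_1\otimes x_2\otimes x_3]\in\mathrm{PG}(7,3)=\mathbb{P}(V^{\otimes 3})$; a geometric hyperplane is projective if it is the set of points whose images lie in some hyperplane of $\mathrm{PG}(7,3)$. *)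

From HB Require Import structures.
From mathcomp Require Import all_boot all_order all_algebra.
Set Implicit Arguments. Unset Strict Implicit. Unset Printing Implicit Defensive.
Import GRing.Theory.
Local Open Scope ring_scope.

Notation F3 := 'F_3.

(* A nonzero vector of GF(3)^2 (as a pair) is a normalized representative of a
   point of PG(1,3) if its first nonzero coordinate equals 1. *)
Definition normalized (v : F3 * F3) : bool :=
  (v.1 == 1) || ((v.1 == 0) && (v.2 == 1)).

Definition PL := {v : F3 * F3 | normalized v}.

Definition rep (x : PL) (k : 'I_2) : F3 :=
  if k == ord0 then (val x).1 else (val x).2.

Definition SPoint := {ffun 'I_3 -> PL}.

Definition sline (p : SPoint) (i : 'I_3) : {set SPoint} :=
  [set q : SPoint | [forall j : 'I_3, (j != i) ==> (q j == p j)]].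

Definition slines : {set {set SPoint}} :=
  [set sline p i | p : SPoint, i : 'I_3].

Definition geom_hyperplane (H : {set SPoint}) : bool :=
  (H != [set: SPoint]) &&
  [forall l in slines, (l \subset H) || (#|l :&: H| == 1)%N].

Definition singular_hyp (p : SPoint) : {set SPoint} :=
  [set q : SPoint | [exists j : 'I_3, q j == p j]].

Definition ovoid (H : {set SPoint}) : bool :=
  geom_hyperplane H && [forall l in slines, ~~ (l \subset H)].

(* Standard basis of V^{(x)3}, V = GF(3)^2: indexed by e : 'I_3 -> 'I_2,
   basis vector e_{e 0} (x) e_{e 1} (x) e_{e 2}. A linear functional on
   V^{(x)3} is a coefficient vector c; its value on the Segre image
   x_0 (x) x_1 (x) x_2 of a point x is computed below. *)
Definition TIdx := {ffun 'I_3 -> 'I_2}.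

Definition segre_eval (c : {ffun TIdx -> F3}) (x : SPoint) : F3 :=
  \sum_(e : TIdx) c e * \prod_(j : 'I_3) rep (x j) (e j).

(* projective: H is the set of points whose Segre image lies in a hyperplane
   of PG(7,3), i.e. in the kernel of a nonzero linear functional. *)
Definition projective (H : {set SPoint}) : bool :=
  [exists c : {ffun TIdx -> F3},
     (c != 0) && (H == [set x : SPoint | segre_eval c x == 0])].

Definition ghyps : {set {set SPoint}} := [set H | geom_hyperplane H].

From HB Require Import structures.
From mathcomp Require Import all_boot all_order all_algebra.
Import GRing.Theory.

Set Implicit Arguments.
Unset Strict Implicit.
Unset Printing Implicit Defensive.

Section PrefixSearch.

Variable prefix_ok : nat -> seq bool -> bool.

Fixpoint grow (f m : nat) (r : seq bool) : seq (seq bool) :=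
  if f is f'.+1 then
    (if prefix_ok m (false :: r) then grow f' m.+1 (false :: r) else [::]) ++
    (if prefix_ok m (true :: r) then grow f' m.+1 (true :: r) else [::])
  else [:: rev r].

Definition prefix_search (n : nat) : seq (seq bool) := grow n 0 [::].

Lemma mem_grow f m r b : b \in grow f m r -> exists2 s, size s = f & b = rev r ++ s.
Proof.
elim: f m r => [|f IH] m r /=.
  by rewrite mem_seq1 => /eqP ->; exists [::]; rewrite ?cats0.
have step x : b \in grow f m.+1 (x :: r) -> exists2 s, size s = f.+1 & b = rev r ++ s.
  by case/IH=> s <- ->; exists (x :: s); rewrite // rev_cons cat_rcons.
by rewrite mem_cat; case/orP; case: ifP => // _ /step.
Qed.

Lemma grow_uniq f m r : uniq (grow f m r).
Proof.
elim: f m r => [|f IH] m r //=; rewrite cat_uniq.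
apply/and3P; split; try by case: ifP.
apply/hasP=> -[b]; case: ifP => // _ /mem_grow [s _ ->].
case: ifP => // _ /mem_grow [s' _] /eqP.
by rewrite !rev_cons -!cats1 -!catA eqseq_cat ?size_rev //= andbF.
Qed.


Section Completeness.

Variable b : seq bool.
Hypothesis b_ok : forall {m}, m < size b -> prefix_ok m (rev (take m.+1 b)).

Lemma grow_complete f m : m + f = size b -> b \in grow f m (rev (take m b)).
Proof.
elim: f m => [|f IH] m /=.
  by rewrite addn0 => ->; rewrite take_size revK mem_seq1.
rewrite addnS => m_f; have m_lt : m < size b by rewrite -m_f ltnS leq_addr.
have := IH m.+1; rewrite addSn => /(_ m_f).
have := b_ok m_lt; rewrite (take_nth false m_lt) rev_rcons mem_cat.
by case: (nth false b m) => -> ->; rewrite ?orbT.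
Qed.

Lemma prefix_search_complete : b \in prefix_search (size b).
Proof. by have := @grow_complete (size b) 0 erefl; rewrite take0. Qed.

End Completeness.

Lemma size_prefix_search n b : b \in prefix_search n -> size b = n.
Proof. by case/mem_grow=> s <- ->. Qed.

Lemma prefix_search_uniq n : uniq (prefix_search n).
Proof. exact: grow_uniq. Qed.

End PrefixSearch.

Inductive trie := Leaf | Node of bool & trie & trie.

Fixpoint trie_mem (t : trie) (s : seq bool) : bool :=
  if t is Node h t0 t1 then
    if s is x :: s' then trie_mem (if x then t1 else t0) s' else h
  else false.

Fixpoint trie_insert (t : trie) (s : seq bool) : trie :=
  let: (h, t0, t1) := if t is Node h t0 t1 then (h, t0, t1) else (false, Leaf, Leaf) in
  if s is x :: s' then
    if x then Node h t0 (trie_insert t1 s') else Node h (trie_insert t0 s') t1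
  else Node true t0 t1.

Definition trie_of (L : seq (seq bool)) : trie := foldr (fun s t => trie_insert t s) Leaf L.

Lemma trie_mem_insert t s s' : trie_mem (trie_insert t s) s' = (s' == s) || trie_mem t s'.
Proof.
by elim: s t s' => [|x s IH] [|h t0 t1] [|[] s'] //=; case: x; rewrite /= ?IH ?orbF.
Qed.

Lemma trie_mem_of L s : trie_mem (trie_of L) s = (s \in L).
Proof.
elim: L => [|s' L IH] //.
by rewrite (_ : trie_of _ = trie_insert (trie_of L) s') // trie_mem_insert IH in_cons.
Qed.
Definition digit (b n j : nat) : nat := n %/ b ^ (2 - j) %% b.

Definition code3 (b : nat) (a : nat -> nat) : nat := (a 0 * b + a 1) * b + a 2.


Section ThreeDigitCode.

Variables (b : nat) (a : nat -> nat).
Hypothesis a_lt : forall k, k < 3 -> a k < b.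

Let b_gt0 : 0 < b. Proof. exact: leq_ltn_trans (a_lt (isT : 0 < 3)). Qed.

Lemma digit_code3 j : j < 3 -> digit b (code3 b a) j = a j.
Proof.
have divE x y : y < b -> (x * b + y) %/ b = x by move=> y_lt; rewrite divnMDl ?divn_small ?addn0.
have modE x y : y < b -> (x * b + y) %% b = y by move=> y_lt; rewrite modnMDl modn_small.
rewrite /digit /code3; case: j => [|[|[|//]]] _ /=.
- by rewrite expnS expn1 divnMA !divE ?modn_small ?a_lt.
- by rewrite expn1 divE ?modE ?a_lt.
- by rewrite expn0 divn1 modE ?a_lt.
Qed.

Lemma code3_lt : code3 b a < b ^ 3.
Proof.
have step x y c : x < c -> y < b -> x * b + y < c * b.
  move=> x_lt y_lt; apply: (@leq_trans (x.+1 * b)); first by rewrite mulSnr ltn_add2l.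
  by rewrite leq_mul2r x_lt orbT.
rewrite /code3 !expnS expn0 muln1 mulnA.
by apply: (step); [apply: (step)|]; apply: a_lt.
Qed.

End ThreeDigitCode.

Lemma code3_digit b n : n < b ^ 3 -> code3 b (digit b n) = n.
Proof.
move=> n_lt; rewrite /digit /code3 /= expn0 divn1 expn1 expnS expn1 divnMA.
rewrite (modn_small (m := n %/ b %/ b)) -?divn_eq //.
by rewrite -divnMA ltn_divLR ?muln_gt0 -?expnSr //; case: b n_lt => // -[].
Qed.


Section FfunCode.

Variables (T : Type) (b : nat) (idx : T -> nat) (of_idx : nat -> T).
Hypotheses (idxK : cancel idx of_idx) (idx_lt : forall x, idx x < b)
           (of_idxK : forall k, k < b -> idx (of_idx k) = k).

Definition ffun_code (x : {ffun 'I_3 -> T}) : nat := code3 b (fun j => idx (x (inord j))).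

Definition ffun_decode (n : nat) : {ffun 'I_3 -> T} := [ffun j : 'I_3 => of_idx (digit b n j)].

Lemma digit_ffun_code x (j : 'I_3) : digit b (ffun_code x) j = idx (x j).
Proof. by rewrite digit_code3 ?inord_val // => k _; apply: idx_lt. Qed.

Lemma ffun_code_lt x : ffun_code x < b ^ 3.
Proof. by apply: code3_lt => k _; apply: idx_lt. Qed.

Lemma ffun_codeK : cancel ffun_code ffun_decode.
Proof. by move=> x; apply/ffunP => j; rewrite ffunE digit_ffun_code idxK. Qed.

Lemma ffun_decodeK n : n < b ^ 3 -> ffun_code (ffun_decode n) = n.
Proof.
move=> n_lt; have b_gt0 : 0 < b by case: b n_lt.
have digit_lt (j : nat) : digit b n j < b by rewrite ltn_pmod.
by rewrite /ffun_code /code3 !ffunE !inordK // !of_idxK // -[RHS](code3_digit n_lt).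
Qed.

End FfunCode.
Definition pl_index (x : PL) : nat := if (val x).1 == 0%R then 3 else val (val x).2.

Definition pl_of_index (k : nat) : PL :=
  if k == 3 then exist _ (0%R, 1%R) isT else exist _ (1%R, (k%:R)%R) isT.

Lemma pl_indexK : cancel pl_index pl_of_index.
Proof.
by case=> -[[[|[|[|//]]] ?] [[|[|[|//]]] ?]] //= ?; apply: val_inj; apply/eqP.
Qed.

Lemma pl_index_lt x : pl_index x < 4.
Proof. by rewrite /pl_index; case: ifP => // _; apply: ltn_trans (ltn_ord _) _. Qed.

Lemma pl_of_indexK k : k < 4 -> pl_index (pl_of_index k) = k.
Proof. by case: k => [|[|[|[|]]]]. Qed.

Definition point_index : SPoint -> nat := ffun_code 4 pl_index.
Definition point_of_index : nat -> SPoint := ffun_decode 4 pl_of_index.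

Lemma point_index_lt x : point_index x < 64.
Proof. exact: (ffun_code_lt pl_index_lt x). Qed.

Lemma point_indexK : cancel point_index point_of_index.
Proof. exact: (ffun_codeK pl_indexK pl_index_lt). Qed.

Lemma point_of_indexK n : n < 64 -> point_index (point_of_index n) = n.
Proof. exact: (ffun_decodeK pl_of_indexK). Qed.

Lemma digit_point_index x (j : 'I_3) : digit 4 (point_index x) j = pl_index (x j).
Proof. exact: (digit_ffun_code pl_index_lt x j). Qed.

Lemma mem_iota0 m n : (m \in iota 0 n) = (m < n).
Proof. by rewrite mem_iota. Qed.

Lemma forall_ord_all n (P : nat -> bool) : [forall j : 'I_n, P j] = all P (iota 0 n).
Proof.
rewrite -val_enum_ord all_map.
by apply/forallP/allP => [P_all j _ | P_all j]; apply: P_all; rewrite ?mem_enum.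
Qed.

Lemma exists_ord_has n (P : nat -> bool) : [exists j : 'I_n, P j] = has P (iota 0 n).
Proof. by apply/negb_inj; rewrite negb_exists -all_predC -forall_ord_all. Qed.

Definition on_line (m i n : nat) : bool :=
  all (fun j => (j == i) || (digit 4 n j == digit 4 m j)) (iota 0 3).

Definition line_index (m i : nat) : seq nat := [seq n <- iota 0 64 | on_line m i n].

Lemma line_index_uniq m i : uniq (line_index m i).
Proof. exact/filter_uniq/iota_uniq. Qed.

Lemma line_index_lt m i : all (gtn 64) (line_index m i).
Proof. by apply/allP => n; rewrite mem_filter mem_iota => /and3P []. Qed.

Lemma mem_sline p (i : 'I_3) q :
  (q \in sline p i) = (point_index q \in line_index (point_index p) i).
Proof.
rewrite inE mem_filter mem_iota0 point_index_lt andbT /on_line -forall_ord_all.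
by apply: eq_forallb => j; rewrite !digit_point_index (inj_eq (can_inj pl_indexK)) implyNb.
Qed.

Definition all_lines : seq (seq nat) := [seq line_index m i | m <- iota 0 64, i <- iota 0 3].

Lemma forall_slinesE (P : {set SPoint} -> bool) (p : pred (seq nat)) :
  (forall x (i : 'I_3), P (sline x i) = p (line_index (point_index x) i)) ->
  [forall l in slines, P l] = all p all_lines.
Proof.
move=> Pp; apply/forall_inP/all_allpairsP => [P_all m i | p_all _ /imset2P [x i _ _ ->]].
  rewrite !mem_iota /= => m_lt i_lt.
  by rewrite -(point_of_indexK m_lt) -[i]/(val (Ordinal i_lt)) -Pp P_all ?imset2_f.
by rewrite Pp p_all ?mem_iota ?point_index_lt ?ltn_ord.
Qed.
Implicit Types (H : {set SPoint}) (x y : SPoint).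

Definition bits H : seq bool := [seq point_of_index n \in H | n <- iota 0 64].

Definition set_of_bits (b : seq bool) : {set SPoint} := [set x | nth false b (point_index x)].

Lemma size_bits H : size (bits H) = 64.
Proof. by rewrite size_map size_iota. Qed.

Lemma nth_bits H n : n < 64 -> nth false (bits H) n = (point_of_index n \in H).
Proof. by move=> n_lt; rewrite (nth_map 0) ?size_iota ?nth_iota. Qed.

Lemma nth_bits_point_index H x : nth false (bits H) (point_index x) = (x \in H).
Proof. by rewrite nth_bits ?point_index_lt ?point_indexK. Qed.

Lemma bitsK : cancel bits set_of_bits.
Proof. by move=> H; apply/setP => x; rewrite inE nth_bits_point_index. Qed.

Lemma set_of_bitsK b : size b = 64 -> bits (set_of_bits b) = b.
Proof.
move=> b_size; apply: (@eq_from_nth _ false); rewrite size_bits ?b_size // => n n_lt.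
by rewrite nth_bits // inE point_of_indexK.
Qed.

Lemma card_bits_on H (L : seq nat) : uniq L -> all (gtn 64) L ->
  #|[pred x in H | point_index x \in L]| = count (nth false (bits H)) L.
Proof.
move=> L_uniq /allP L_lt; rewrite -size_filter -(size_map point_of_index).
rewrite -(card_uniqP _); last first.
  rewrite map_inj_in_uniq ?filter_uniq // => n n'.
  rewrite !mem_filter => /andP [_ /L_lt n_lt] /andP [_ /L_lt n'_lt] /(congr1 point_index).
  by rewrite !point_of_indexK.
apply: eq_card => x; rewrite inE; apply/andP/mapP => [[x_in_H x_in_L] | [n]].
  by exists (point_index x); rewrite ?point_indexK // mem_filter nth_bits_point_index x_in_H.
rewrite mem_filter => /andP [n_in_H n_in_L] ->; have n_lt := L_lt n n_in_L.
by rewrite point_of_indexK // -nth_bits.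
Qed.

Lemma card_bits H : #|H| = count id (bits H).
Proof.
have iota_lt : all (gtn 64) (iota 0 64) by apply/allP => n; rewrite mem_iota0.
rewrite count_map -(eq_in_count (a1 := nth false (bits H))) => [|n]; last first.
  by rewrite mem_iota0 => /nth_bits.
rewrite -card_bits_on ?iota_uniq //.
by apply: eq_card => x; rewrite inE mem_iota0 point_index_lt andbT.
Qed.

Lemma sline_subset H x i :
  (sline x i \subset H) = all (nth false (bits H)) (line_index (point_index x) i).
Proof.
have /allP line_lt := line_index_lt (point_index x) i.
apply/subsetP/allP => [sub n n_in | all_in y].
  have n_lt := line_lt n n_in.
  by rewrite nth_bits // sub // mem_sline point_of_indexK.
by move=> y_in; rewrite -nth_bits_point_index all_in // -mem_sline.
Qed.

Lemma card_sline H x i :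
  #|sline x i :&: H| = count (nth false (bits H)) (line_index (point_index x) i).
Proof.
rewrite -card_bits_on ?line_index_uniq ?line_index_lt //.
by apply: eq_card => y; rewrite in_setI mem_sline inE andbC.
Qed.

Definition hyperplane_trace (s : seq bool) : bool := all id s || (count id s == 1).

Definition line_ok (b : seq bool) (q : seq nat) : bool :=
  hyperplane_trace [seq nth false b n | n <- q].

Definition hyperplane_bits (b : seq bool) : bool := ~~ all id b && all (line_ok b) all_lines.

Definition ovoid_bits (b : seq bool) : bool :=
  hyperplane_bits b && all (fun q => ~~ all (nth false b) q) all_lines.

Lemma bits_setT H : (H == setT) = all id (bits H).
Proof.
rewrite all_map; apply/eqP/allP => [-> n _ | all_in]; first by rewrite /= inE.
apply/setP => x; rewrite in_setT; have := all_in (point_index x).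
by rewrite mem_iota0 point_index_lt /= point_indexK; apply.
Qed.

Lemma geom_hyperplaneE H : geom_hyperplane H = hyperplane_bits (bits H).
Proof.
rewrite /geom_hyperplane /hyperplane_bits bits_setT; congr (~~ _ && _).
apply: forall_slinesE => x i.
by rewrite sline_subset card_sline /line_ok /hyperplane_trace all_map count_map.
Qed.

Lemma ovoidE H : ovoid H = ovoid_bits (bits H).
Proof.
rewrite /ovoid /ovoid_bits geom_hyperplaneE; congr (_ && _).
by apply: forall_slinesE => x i; rewrite sline_subset.
Qed.
Definition monomial_index : TIdx -> nat := ffun_code 2 (@nat_of_ord 2).
Definition monomial_of_index : nat -> TIdx := ffun_decode 2 (@inord 1).

Lemma monomial_index_lt e : monomial_index e < 8.
Proof. exact: (ffun_code_lt (@ltn_ord 2) e). Qed.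

Lemma monomial_indexK : cancel monomial_index monomial_of_index.
Proof. exact: (ffun_codeK (@inord_val 1) (@ltn_ord 2)). Qed.

Lemma monomial_of_indexK t : t < 8 -> monomial_index (monomial_of_index t) = t.
Proof. exact: (ffun_decodeK (@inordK 1)). Qed.

Lemma digit_monomial_index e (j : 'I_3) : digit 2 (monomial_index e) j = e j.
Proof. exact: (digit_ffun_code (@ltn_ord 2) e j). Qed.

Definition rep_index (d k : nat) : nat := if d == 3 then k else if k == 0 then 1 else d.

Lemma rep_pl_of_index d (k : 'I_2) : d < 4 -> rep (pl_of_index d) k = (rep_index d k)%:R%R.
Proof. by case: k => -[|[|//]] ?; case: d => [|[|[|[|//]]]] _; apply: val_inj. Qed.

Definition monomial (n t : nat) : nat :=
  rep_index (digit 4 n 0) (digit 2 t 0) * rep_index (digit 4 n 1) (digit 2 t 1) *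
  rep_index (digit 4 n 2) (digit 2 t 2).

Lemma prod_rep x (e : TIdx) :
  (\prod_(j < 3) rep (x j) (e j) = (monomial (point_index x) (monomial_index e))%:R)%R.
Proof.
have rep_digit j : rep (x j) (e j) = (rep_index (digit 4 (point_index x) j) (digit 2 (monomial_index e) j))%:R%R.
  by rewrite digit_monomial_index digit_point_index -rep_pl_of_index ?pl_index_lt // pl_indexK.
by rewrite !big_ord_recl big_ord0 !rep_digit /monomial !natrM mulr1 mulrA.
Qed.

Lemma sumn_iota (f : nat -> nat) n : sumn [seq f i | i <- iota 0 n] = \sum_(i < n) f i.
Proof. by rewrite sumnE big_map -(big_mkord xpredT) /index_iota subn0. Qed.

Definition monomials (n : nat) : seq nat := [seq monomial n t | t <- iota 0 8].

Definition monomial_table : seq (seq nat) := map monomials (iota 0 64).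

Definition segre_sum (cs vs : seq nat) : nat := sumn [seq nth 0 cs t * nth 0 vs t | t <- iota 0 8].

Definition coeffs (c : {ffun TIdx -> F3}) : seq nat :=
  [seq nat_of_ord (c (monomial_of_index t)) | t <- iota 0 8].

Lemma segre_evalE c x :
  segre_eval c x = (segre_sum (coeffs c) (monomials (point_index x)))%:R%R.
Proof.
rewrite /segre_eval (reindex (fun t : 'I_8 => monomial_of_index t)) /=; last first.
  exists (fun e => Ordinal (monomial_index_lt e)) => [t _ | e _]; last exact: monomial_indexK.
  by apply: val_inj; rewrite /= monomial_of_indexK.
rewrite /segre_sum sumn_iota natr_sum; apply: eq_bigr => t _.
rewrite prod_rep monomial_of_indexK // natrM !(nth_map 0) ?size_iota // !nth_iota //.
by rewrite natr_Zp.
Qed.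

Lemma F3_nat_eq0 n : ((n%:R : F3) == 0)%R = (n %% 3 == 0).
Proof. by rewrite -val_eqE /= (val_Fp_nat (isT : prime 3)). Qed.

Definition zero_bits (cs : seq nat) : seq bool :=
  [seq segre_sum cs vs %% 3 == 0 | vs <- monomial_table].

Lemma bits_zero_set c : bits [set x | segre_eval c x == 0%R] = zero_bits (coeffs c).
Proof.
rewrite /zero_bits /monomial_table -map_comp; apply/eq_in_map => n; rewrite mem_iota0 => n_lt.
by rewrite inE segre_evalE point_of_indexK // F3_nat_eq0.
Qed.

Fixpoint words (k : nat) : seq (seq nat) :=
  if k is k'.+1 then [seq v :: s | v <- iota 0 3, s <- words k'] else [:: [::]].

Lemma mem_words k cs : (cs \in words k) = (size cs == k) && all (gtn 3) cs.
Proof.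
elim: k cs => [|k IH] cs; first by rewrite mem_seq1; case: cs.
apply/allpairsP/idP => [[[w s] [w_in s_in ->]] | ].
  by move: w_in s_in; rewrite mem_iota0 IH /= eqSS => -> /andP [-> ->].
case: cs => [|v cs] // /andP [size_cs /andP [v_lt cs_lt]].
by exists (v, cs); rewrite mem_iota0 IH -eqSS; split => //; apply/andP.
Qed.

Lemma nth_coeffs c e : nth 0 (coeffs c) (monomial_index e) = c e.
Proof.
rewrite (nth_map 0) ?size_iota ?monomial_index_lt // nth_iota ?monomial_index_lt //.
by rewrite add0n monomial_indexK.
Qed.

Lemma coeffs_inj : injective coeffs.
Proof. by move=> c c' eq_cc'; apply/ffunP => e; apply: ord_inj; rewrite -!nth_coeffs eq_cc'. Qed.

Lemma coeffs0 : coeffs 0%R = nseq 8 0.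
Proof.
apply: (@eq_from_nth _ 0) => [|t]; rewrite size_map size_iota // => t_lt.
by rewrite (nth_map 0) ?size_iota // ffunE nth_nseq t_lt.
Qed.

Lemma coeffs_words c : coeffs c \in words 8.
Proof.
rewrite mem_words size_map size_iota eqxx andTb.
by apply/allP => _ /mapP [t _ ->]; apply: ltn_ord.
Qed.

Definition ffun_of_coeffs (cs : seq nat) : {ffun TIdx -> F3} :=
  [ffun e => (nth 0 cs (monomial_index e))%:R%R].

Lemma ffun_of_coeffsK cs : cs \in words 8 -> coeffs (ffun_of_coeffs cs) = cs.
Proof.
rewrite mem_words => /andP [/eqP size_cs /allP cs_lt].
apply: (@eq_from_nth _ 0) => [|t]; rewrite size_map size_iota ?size_cs // => t_lt.
rewrite (nth_map 0) ?size_iota // nth_iota // add0n ffunE monomial_of_indexK //.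
rewrite (val_Fp_nat (isT : prime 3)) modn_small //.
by apply: cs_lt; rewrite mem_nth ?size_cs.
Qed.

Definition zero_sets : seq (seq bool) :=
  [seq zero_bits cs | cs <- words 8 & cs != nseq 8 0].

Lemma projectiveE H : projective H = (bits H \in zero_sets).
Proof.
apply/existsP/mapP => [[c /andP [c_nz /eqP ->]] | [cs]].
  exists (coeffs c); last by rewrite bits_zero_set.
  by rewrite mem_filter coeffs_words -coeffs0 (inj_eq coeffs_inj) c_nz.
rewrite mem_filter => /andP [cs_nz cs_word] bits_H.
exists (ffun_of_coeffs cs); apply/andP; split.
  by rewrite -(inj_eq coeffs_inj) coeffs0 ffun_of_coeffsK.
apply/eqP; rewrite -(bitsK H) bits_H -[X in zero_bits X](ffun_of_coeffsK cs_word).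
by rewrite -bits_zero_set bitsK.
Qed.

Definition zero_set_trie : trie := trie_of zero_sets.

Definition projective_bits (b : seq bool) : bool := trie_mem zero_set_trie b.

Lemma projective_bitsE H : projective H = projective_bits (bits H).
Proof. by rewrite /projective_bits trie_mem_of projectiveE. Qed.
Definition singular_bits (m : nat) : seq bool :=
  [seq has (fun j => digit 4 n j == digit 4 m j) (iota 0 3) | n <- iota 0 64].

Lemma bits_singular_hyp x : bits (singular_hyp x) = singular_bits (point_index x).
Proof.
apply/eq_in_map => n; rewrite mem_iota0 => n_lt; rewrite inE -exists_ord_has.
apply: eq_existsb => j; rewrite -{2}(point_of_indexK n_lt) !digit_point_index.
by rewrite (inj_eq (can_inj pl_indexK)).
Qed.

Definition singular_table : seq (seq bool) := map singular_bits (iota 0 64).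
Definition hyperplane_enumeration (S : seq (seq bool)) : Prop :=
  uniq S /\ forall b, (b \in S) = (size b == 64) && hyperplane_bits b.


Section Enumeration.

Variable S : seq (seq bool).
Hypothesis S_enum : hyperplane_enumeration S.

Let size_S b : b \in S -> size b = 64.
Proof. by rewrite (proj2 S_enum) => /andP [/eqP]. Qed.

Lemma mem_ghyps H : (H \in ghyps) = (bits H \in S).
Proof. by rewrite inE geom_hyperplaneE (proj2 S_enum) size_bits eqxx andTb. Qed.

Lemma card_ghyps_pred (P : pred {set SPoint}) (p : pred (seq bool)) :
  (forall H, P H = p (bits H)) -> #|[set H in ghyps | P H]| = count p S.
Proof.
move=> Pp; rewrite -size_filter -(size_map set_of_bits) -(card_uniqP _); last first.
  rewrite map_inj_in_uniq ?filter_uniq ?(proj1 S_enum) // => b b'.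
  rewrite !mem_filter => /andP [_ /size_S b_size] /andP [_ /size_S b'_size] eq_bb'.
  by rewrite -(set_of_bitsK b_size) eq_bb' set_of_bitsK.
apply: eq_card => H; rewrite inE mem_ghyps Pp; apply/andP/mapP => [[H_in pH] | [b]].
  by exists (bits H); rewrite ?bitsK // mem_filter pH.
by rewrite mem_filter => /andP [pb b_in] ->; rewrite set_of_bitsK ?size_S.
Qed.

Lemma card_ghyps_predC (P : pred {set SPoint}) (p : pred (seq bool)) :
  (forall H, P H = p (bits H)) -> #|[set H in ghyps | ~~ P H]| = size S - count p S.
Proof.
move=> Pp; rewrite (card_ghyps_pred (p := predC p)) => [|H]; last by rewrite Pp.
by rewrite -(count_predC p) addKn.
Qed.

Lemma card_ghyps : #|ghyps| = size S.
Proof.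
rewrite -count_predT -(card_ghyps_pred (P := predT)) //.
by apply: eq_card => H; rewrite !inE andbT.
Qed.

Lemma card_ghyps_of_size k : #|[set H in ghyps | #|H| == k]| = count (fun b => count id b == k) S.
Proof. by apply: card_ghyps_pred => H; rewrite card_bits. Qed.

Lemma ghyps_all (Q : pred {set SPoint}) (q : pred (seq bool)) :
  (forall H, Q H = q (bits H)) -> all q S -> {in ghyps, forall H, Q H}.
Proof. by move=> Qq /allP qS H; rewrite mem_ghyps Qq => /qS. Qed.

Lemma ghyps37E :
  all (fun b => (count id b == 37) ==> (b \in singular_table)) S ->
  all (fun b => hyperplane_bits b && (count id b == 37)) singular_table ->
  [set H in ghyps | #|H| == 37] = [set singular_hyp x | x : SPoint].
Proof.
move=> /allP S37 /allP singular_ok; apply/setP => H; rewrite inE.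
apply/andP/imsetP => [[H_in H37] | [x _ ->]].
  have /mapP [m] : bits H \in singular_table.
    by have := S37 (bits H); rewrite -mem_ghyps -card_bits H37 => /(_ H_in).
  rewrite mem_iota0 => m_lt bits_H; exists (point_of_index m) => //.
  by rewrite -(bitsK H) bits_H -[m in singular_bits m](point_of_indexK m_lt) -bits_singular_hyp bitsK.
have := singular_ok (bits (singular_hyp x)).
rewrite bits_singular_hyp map_f ?mem_iota0 ?point_index_lt // => /(_ isT) /andP [x_hyp x37].
by rewrite inE geom_hyperplaneE card_bits bits_singular_hyp x_hyp.
Qed.

Lemma ghyps16E :
  all (fun b => ovoid_bits b == (count id b == 16)) S ->
  [set H in ghyps | #|H| == 16] = [set H | ovoid H].
Proof.
move=> /allP S16; apply/setP => H; rewrite !inE.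
have [H_hyp | H_nhyp] := boolP (geom_hyperplane H); last by rewrite /ovoid (negbTE H_nhyp).
have bits_H : bits H \in S by rewrite -mem_ghyps inE.
by rewrite card_bits ovoidE (eqP (S16 _ bits_H)).
Qed.

Lemma card_projective_ovoids :
  #|[set H | ovoid H & projective H]| = count (fun b => ovoid_bits b && projective_bits b) S.
Proof.
rewrite -(card_ghyps_pred (P := fun H => ovoid H && projective H)) => [|H]; last first.
  by rewrite ovoidE projective_bitsE.
apply: eq_card => H; rewrite !inE; apply/andP/and3P => [[ovH prH] | [_ ovH prH]] //.
by split=> //; case/andP: ovH.
Qed.

End Enumeration.
Definition partial_trace (n : nat) (s : seq bool) : bool :=
  ((count id s <= 1) || all id s) && ((size s == n) ==> hyperplane_trace s).

Lemma partial_trace_subseq s v :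
  hyperplane_trace v -> subseq s v -> partial_trace (size v) s.
Proof.
move=> v_ok sub_sv; apply/andP; split.
  case/orP: v_ok => [/allP v_all | /eqP <-]; last by rewrite leq_count_subseq.
  by apply/orP; right; apply/allP => y /(mem_subseq sub_sv) /v_all.
by apply/implyP; rewrite (size_subseq_leqif sub_sv).2 => /eqP ->.
Qed.

Definition line_table : seq (seq (seq nat)) :=
  [seq [seq line_index m i | i <- iota 0 3] | m <- iota 0 64].

(* [r] lists the bits of the points [0, ..., m] in reverse order, so the bit
   of point [n <= m] sits at position [m - n]. *)
Definition prefix_ok (m : nat) (r : seq bool) : bool :=
  all (fun q => partial_trace (size q) [seq nth false r (m - n) | n <- q & n <= m])
      (nth [::] line_table m).

Lemma nth_rev_take T (x0 : T) (s : seq T) m n :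
  n <= m -> m < size s -> nth x0 (rev (take m.+1 s)) (m - n) = nth x0 s n.
Proof.
move=> n_le m_lt; have take_size : size (take m.+1 s) = m.+1 by rewrite size_takel.
rewrite nth_rev take_size ?ltnS ?leq_subr // subSS subKn // nth_take //.
Qed.

Lemma mem_all_lines m i : m < 64 -> i < 3 -> line_index m i \in all_lines.
Proof. by move=> m_lt i_lt; apply/allpairsP; exists (m, i); rewrite !mem_iota0. Qed.

Lemma nth_line_table m : m < 64 -> nth [::] line_table m = [seq line_index m i | i <- iota 0 3].
Proof. by move=> m_lt; rewrite (nth_map 0) ?size_iota ?nth_iota ?add0n. Qed.

Lemma partial_trace_prefix b m q : m < size b -> line_ok b q ->
  partial_trace (size q) [seq nth false (rev (take m.+1 b)) (m - n) | n <- q & n <= m].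
Proof.
move=> m_lt q_ok.
have -> : [seq nth false (rev (take m.+1 b)) (m - n) | n <- q & n <= m] =
          [seq nth false b n | n <- q & n <= m].
  by apply/eq_in_map => n; rewrite mem_filter => /andP [n_le _]; rewrite nth_rev_take.
rewrite -(size_map (nth false b)); apply: partial_trace_subseq q_ok _.
exact/map_subseq/filter_subseq.
Qed.

Lemma prefix_ok_hyperplane b m :
  size b = 64 -> all (line_ok b) all_lines -> m < 64 -> prefix_ok m (rev (take m.+1 b)).
Proof.
move=> b_size /allP b_ok m_lt; rewrite /prefix_ok nth_line_table // all_map.
apply/allP => i; rewrite mem_iota0 => i_lt.
by apply: partial_trace_prefix; rewrite ?b_size // b_ok ?mem_all_lines.
Qed.

Definition hyperplanes : seq (seq bool) :=
  [seq b <- prefix_search prefix_ok 64 | hyperplane_bits b].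

Lemma mem_hyperplanes b : size b = 64 -> (b \in hyperplanes) = hyperplane_bits b.
Proof.
move=> b_size; rewrite mem_filter; apply: andb_idr => /andP [_ b_lines].
rewrite -b_size; apply: prefix_search_complete => m m_lt.
by apply: prefix_ok_hyperplane; rewrite -?b_size.
Qed.

Lemma size_hyperplanes b : b \in hyperplanes -> size b = 64.
Proof. by rewrite mem_filter => /andP [_ /size_prefix_search]. Qed.

Lemma hyperplanes_uniq : uniq hyperplanes.
Proof. exact/filter_uniq/prefix_search_uniq. Qed.



Lemma hyperplanes_enumeration : hyperplane_enumeration hyperplanes.
Proof.
split=> [|b]; first exact: hyperplanes_uniq.
have [b_size | b_size] := eqVneq (size b) 64; first exact: mem_hyperplanes.
by apply/negbTE/negP => /size_hyperplanes b64; rewrite b64 eqxx in b_size.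
Qed.
Lemma card_hyperplanes : size hyperplanes = 3424.
Proof. by vm_compute. Qed.

Lemma count_projective_hyperplanes : count projective_bits hyperplanes = 3280.
Proof. by vm_compute. Qed.

Lemma nonprojective_hyperplanes_ovoid : all (fun b => projective_bits b || ovoid_bits b) hyperplanes.
Proof. by vm_compute. Qed.

Lemma count_hyperplanes_by_size :
  [/\ count (fun b => count id b == 37) hyperplanes = 64,
      count (fun b => count id b == 28) hyperplanes = 288,
      count (fun b => count id b == 22) hyperplanes = 1728,
      count (fun b => count id b == 19) hyperplanes = 768 &
      count (fun b => count id b == 16) hyperplanes = 576].
Proof. by vm_compute. Qed.

Lemma hyperplanes37_singular : all (fun b => (count id b == 37) ==> (b \in singular_table)) hyperplanes.
Proof. by vm_compute. Qed.

Lemma singular_table_hyperplanes :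
  all (fun b => hyperplane_bits b && (count id b == 37)) singular_table.
Proof. by vm_compute. Qed.

Lemma hyperplanes_ovoid16 : all (fun b => ovoid_bits b == (count id b == 16)) hyperplanes.
Proof. by vm_compute. Qed.

Lemma count_projective_ovoids : count (fun b => ovoid_bits b && projective_bits b) hyperplanes = 432.
Proof. by vm_compute. Qed.
Theorem mainTheorem3 :
  (#|ghyps| = 3424
  /\ #|[set H in ghyps | projective H]| = 3280
  /\ #|[set H in ghyps | ~~ projective H]| = 144
  /\ (forall H, H \in ghyps -> ~~ projective H -> ovoid H)
  /\ #|[set H in ghyps | #|H| == 37]| = 64
  /\ #|[set H in ghyps | #|H| == 28]| = 288
  /\ #|[set H in ghyps | #|H| == 22]| = 1728
  /\ #|[set H in ghyps | #|H| == 19]| = 768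
  /\ #|[set H in ghyps | #|H| == 16]| = 576
  /\ [set H in ghyps | #|H| == 37] = [set singular_hyp p | p : SPoint]
  /\ [set H in ghyps | #|H| == 16] = [set H | ovoid H]
  /\ #|[set H | ovoid H & projective H]| = 432)%N.
Proof.
have enum := hyperplanes_enumeration.
split; first by rewrite (card_ghyps enum) card_hyperplanes.
split; first by rewrite (card_ghyps_pred enum projective_bitsE) count_projective_hyperplanes.
split.
  by rewrite (card_ghyps_predC enum projective_bitsE) card_hyperplanes count_projective_hyperplanes.
split.
  have proj_or_ovoid := ghyps_all enum (Q := fun H => projective H || ovoid H)
    (q := fun b => projective_bits b || ovoid_bits b)
    (fun H => congr2 orb (projective_bitsE H) (ovoidE H)) nonprojective_hyperplanes_ovoid.
  by move=> H /proj_or_ovoid /orP [-> | ].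
have [n37 n28 n22 n19 n16] := count_hyperplanes_by_size.
split; first exact: (etrans (card_ghyps_of_size enum 37) n37).
split; first exact: (etrans (card_ghyps_of_size enum 28) n28).
split; first exact: (etrans (card_ghyps_of_size enum 22) n22).
split; first exact: (etrans (card_ghyps_of_size enum 19) n19).
split; first exact: (etrans (card_ghyps_of_size enum 16) n16).
split; first exact: (ghyps37E enum hyperplanes37_singular singular_table_hyperplanes).
split; first exact: (ghyps16E enum hyperplanes_ovoid16).
exact: (etrans (card_projective_ovoids enum) count_projective_ovoids).
Qed.
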